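(* For every $Q\subset\mathrm{EX}(M)$ and every $(\alpha,U)\in S_Q$, the restriction $q|_{N_{(\alpha,U)}}:N_{(\alpha,U)}\to q(N_{(\alpha,U)})$ is a homeomorphism onto its image.
   Context: Conventions: $M$ is an $n$-dimensional smooth manifold (Hausdorff, second countable) with maximal $C^\infty$ atlas $\mathcal{A}(M)$; every chart $\alpha$ has open domain $\mathrm{dom}(\alpha)\subset M$ and open range $\mathrm{ran}(\alpha)\subset\mathbb{R}^n$. For $A\subset\mathbb{R}^n$, $\partial A$ is its boundary in $\mathbb{R}^n$; for $A\subset U\subset\mathbb{R}^n$, $\partial_U A$ is the boundary of $A$ relative to $U$. An admissible boundary point of $\alpha$ is a $p\in\partial\,\mathrm{ran}(\alpha)$ such that every sequence $(x_i)\subset\mathrm{dom}(\alpha)$ with $\alpha(x_i)\to p$ has no accumulation point in $M$; $B(\alpha)$ is the set of these. An extension is a pair $(\alpha,U)$, $U\subset\mathbb{R}^n$ open, $\mathrm{ran}(\alpha)\subset U$, $\emptyset\ne\partial_U\mathrm{ran}(\alpha)\subset B(\alpha)$; $\mathrm{EX}(M)$ is the set of extensions. A boundary set is $(\alpha,U,V)$ with $(\alpha,U)\in\mathrm{EX}(M)$, $V\subset B(\alpha)\cap U$ (a boundary point if $V=\{p\}$). $(\alpha,U,V)$ covers $(\beta,X,Y)$ if for every sequence $(y_i)\subset\mathrm{dom}(\beta)$ with $(\beta(y_i))$ having an accumulation point in $Y$ there is a subsequence $(v_i)\subset\mathrm{dom}(\alpha)$ of $(y_i)$ with $(\alpha(v_i))$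 having an accumulation point in $V$; they are equivalent, $\equiv$, if each covers the other. Completion: for $Q\subset\mathrm{EX}(M)$ let $P=\{(\alpha,\mathrm{ran}(\alpha)):\alpha\in\mathcal{A}(M)\}$, $S_Q=P\cup Q$, $N_{(\alpha,U)}=\mathrm{ran}(\alpha)\cup\partial_U\mathrm{ran}(\alpha)$ with subspace topology of $\mathbb{R}^n$, $N_Q=\bigsqcup_{(\alpha,U)\in S_Q}N_{(\alpha,U)}$ with disjoint-union topology. Identify $x\in N_{(\alpha,U)}$ with $y\in N_{(\beta,X)}$ iff either $x\in\mathrm{ran}(\alpha)$, $y\in\mathrm{ran}(\beta)$, $\beta\circ\alpha^{-1}(x)=y$, or $x\in\partial_U\mathrm{ran}(\alpha)$, $y\in\partial_X\mathrm{ran}(\beta)$, $(\alpha,U,\{x\})\equiv(\beta,X,\{y\})$. $Q(M)$ is the quotient space with the quotient topology and $q:N_Q\to Q(M)$ the quotient map. *)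

From HB Require Import structures.
From mathcomp Require Import all_boot all_order all_algebra.
From mathcomp Require Import all_classical all_reals all_analysis.
From Stdlib Require Relation_Operators.
Set Implicit Arguments. Unset Strict Implicit. Unset Printing Implicit Defensive.
Import Order.TTheory GRing.Theory Num.Theory.
Import numFieldNormedType.Exports.
Local Open Scope classical_set_scope.
Local Open Scope ring_scope.

Section Defs.
Variables (R : realType) (n : nat) (M : topologicalType).

Notation Rn := ('rV[R]_n).

Fixpoint iter_deriv (vs : seq Rn) (g : Rn -> Rn) : Rn -> Rn :=
  match vs with
  | [::] => g
  | v :: vs' => fun x => 'D_v (iter_deriv vs' g) x
  end.

Definition smooth_on (O : set Rn) (g : Rn -> Rn) : Prop :=
  (forall vs v x, O x -> derivable (iter_deriv vs g) x v) /\
  (forall vs x, O x -> {for x, continuous (iter_deriv vs g)}).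

Definition chart := (set M * (M -> Rn))%type.
Definition cdom (a : chart) : set M := a.1.
Definition cmap (a : chart) : M -> Rn := a.2.
Definition cran (a : chart) : set Rn := cmap a @` cdom a.

Definition is_chart (a : chart) : Prop :=
  [/\ open (cdom a),
      {in cdom a &, injective (cmap a)},
      {within cdom a, continuous (cmap a)} &
      forall O, open O -> O `<=` cdom a -> open (cmap a @` O)].

Definition compatible (a b : chart) : Prop :=
  (exists g, smooth_on (cmap a @` (cdom a `&` cdom b)) g /\
     forall x, cdom a x -> cdom b x -> g (cmap a x) = cmap b x) /\
  (exists g, smooth_on (cmap b @` (cdom a `&` cdom b)) g /\
     forall x, cdom a x -> cdom b x -> g (cmap b x) = cmap a x).

Definition maximal_smooth_atlas (A : set chart) : Prop :=
  [/\ forall a, A a -> is_chart a,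
      forall x, exists2 a, A a & cdom a x,
      forall a b, A a -> A b -> compatible a b &
      forall b, is_chart b -> (forall a, A a -> compatible a b) -> A b].

Definition smooth_manifold (A : set chart) : Prop :=
  [/\ hausdorff_space M, @second_countable M & maximal_smooth_atlas A].

Definition boundary (X : set Rn) : set Rn := closure X `\` interior X.
Definition rel_boundary (U X : set Rn) : set Rn :=
  (closure X `&` U) `\` interior X.

Definition acc_point {T : topologicalType} (u : nat -> T) (p : T) : Prop :=
  cluster (u @ \oo) p.

Definition admissible (a : chart) : set Rn :=
  [set p | boundary (cran a) p /\
     forall u : nat -> M, (forall i, cdom a (u i)) ->
       (fun i => cmap a (u i)) @ \oo --> p ->
       ~ (exists m : M, acc_point u m)].

Definition extension (A : set chart) (e : chart * set Rn) : Prop :=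
  let: (a, U) := e in
  [/\ A a, open U, cran a `<=` U,
      rel_boundary U (cran a) !=set0 &
      rel_boundary U (cran a) `<=` admissible a].

Definition covers (a : chart) (V : set Rn) (b : chart) (Y : set Rn) : Prop :=
  forall y : nat -> M, (forall i, cdom b (y i)) ->
    (exists2 p, Y p & acc_point (fun i => cmap b (y i)) p) ->
    exists phi : nat -> nat, {homo phi : i j / (i < j)%N} /\
      (forall i, cdom a (y (phi i))) /\
      exists2 p, V p & acc_point (fun i => cmap a (y (phi i))) p.

Definition bequiv (a : chart) (V : set Rn) (b : chart) (Y : set Rn) : Prop :=
  covers a V b Y /\ covers b Y a V.

Definition ext_index := (chart * set Rn)%type.

Definition S_Q (A : set chart) (Q : set ext_index) : set ext_index :=
  [set e | (A e.1 /\ e.2 = cran e.1) \/ Q e].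

Definition Nset (e : ext_index) : set Rn :=
  cran e.1 `|` rel_boundary e.2 (cran e.1).

Definition NQ (A : set chart) (Q : set ext_index) : Type :=
  {s : S_Q A Q & Nset (val s)}.

Definition nq_index A Q (a : NQ A Q) : ext_index := val (projT1 a).
Definition nq_point A Q (a : NQ A Q) : Rn := val (projT2 a).

Definition ident A Q (a b : NQ A Q) : Prop :=
  let s := nq_index a in let x := nq_point a in
  let t := nq_index b in let y := nq_point b in
  (cran s.1 x /\ cran t.1 y /\
     exists z, [/\ cdom s.1 z, cdom t.1 z, cmap s.1 z = x & cmap t.1 z = y])
  \/
  (rel_boundary s.2 (cran s.1) x /\ rel_boundary t.2 (cran t.1) y /\
     bequiv s.1 [set x] t.1 [set y]).

Definition identb A Q : rel (NQ A Q) :=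
  fun a b => `[< Relation_Operators.clos_refl_sym_trans _ (@ident A Q) a b >].

Lemma identb_refl A Q : reflexive (@identb A Q).
Proof. by move=> a; apply/asboolP; apply: Relation_Operators.rst_refl. Qed.

Lemma identb_sym A Q : symmetric (@identb A Q).
Proof.
move=> a b; apply/asboolP/asboolP => h; exact: Relation_Operators.rst_sym.
Qed.

Lemma identb_trans A Q : transitive (@identb A Q).
Proof.
move=> b a c /asboolP h1 /asboolP h2; apply/asboolP; exact: Relation_Operators.rst_trans h1 h2.
Qed.

Definition ident_equiv A Q : equiv_rel (NQ A Q) :=
  @EquivRelPack _ (@identb A Q)
    (EquivClass (@identb_refl A Q) (@identb_sym A Q) (@identb_trans A Q)).

End Defs.

Local Open Scope quotient_scope.

Definition QM (R : realType) (n : nat) (M : topologicalType)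
  (A : set (chart R n M)) (Q : set (ext_index R n M)) : topologicalType :=
  quotient_topology {eq_quot (@ident_equiv R n M A Q)}.

Definition qmap (R : realType) (n : nat) (M : topologicalType)
  (A : set (chart R n M)) (Q : set (ext_index R n M)) : NQ A Q -> QM A Q :=
  \pi_(QM A Q).

Definition homeo_onto_image (X Y : topologicalType) (f : X -> Y) : Prop :=
  [/\ injective f, continuous f &
      forall O : set X, open O -> exists2 W : set Y, open W & f @` O = W `&` range f].

From HB Require Import structures.
From mathcomp Require Import all_boot all_order all_algebra.
From mathcomp Require Import all_classical all_reals all_analysis.
From mathcomp Require Import unstable.
Import Order.TTheory Num.Theory.
Import numFieldNormedType.Exports.
Set Implicit Arguments. Unset Strict Implicit. Unset Printing Implicit Defensive.
Local Open Scope classical_set_scope.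
Local Open Scope ring_scope.

(** The identification relation is already an equivalence relation, so two
points of N_(α,U) with the same image in Q(M) are identified directly: in
the interior because α is injective, on the boundary because a sequence of
α-values converging to x has a subsequence accumulating at y, forcing x = y.
For openness, an open W of R^n is lifted to an open subset of N_Q which is
saturated for the identification and meets N_(α,U) exactly in W: a point of
a chart β belongs to it when the points of M seen by β near it lie in the
domain of α and are sent by α into a closed set meeting N_(α,U) only inside
W.  Saturation under boundary identifications is the sequence argument
again. *)

Lemma exists_seq_cvg (R : realType) (X : pseudoMetricType R) (T : Type)
    (f : T -> X) (D : set T) (x : X) :
  (forall B, nbhs x B -> exists2 z, D z & B (f z)) ->
  exists2 u : nat -> T, (forall i, D (u i)) & f \o u @ \oo --> x.
Proof.
move=> meets.
have /choice[u hu] : forall k : nat, exists z, D z /\ ball x k.+1%:R^-1 (f z).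
  move=> k; have k_gt0 : 0 < k.+1%:R^-1 :> R by rewrite invr_gt0 ltr0Sn.
  by have [z Dz Bz] := meets _ (nbhsx_ballx x _ k_gt0); exists z.
exists u => [i|]; first by case: (hu i).
apply/cvg_ballP => e e0; near=> k; apply: le_ball (hu k).2; apply: ltW.
by near: k; exact: near_infty_natSinv_lt (PosNum e0).
Unshelve. all: by end_near. Qed.

Lemma cvg_subseq (T : topologicalType) (g : nat -> T) (phi : nat -> nat) (x : T) :
  {homo phi : i j / (i < j)%N} -> g @ \oo --> x -> g \o phi @ \oo --> x.
Proof.
move=> /leq_mono/mono_leq_infl phi_ge gx B /gx[N _ gNB].
by exists N => // i /= Ni; apply: gNB; exact: leq_trans Ni (phi_ge i).
Qed.

Lemma cvg_acc_point (T : topologicalType) (g : nat -> T) (x : T) :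
  g @ \oo --> x -> acc_point g x.
Proof. by move=> gx A B gA /gx gB; exact: filter_ex (filterI gA gB). Qed.

Lemma cvg_acc_point_eq (T : topologicalType) (g : nat -> T) (x y : T) :
  hausdorff_space T -> g @ \oo --> x -> acc_point g y -> x = y.
Proof. by move=> hT gx gy; apply: hT; exact: cvg_cluster gx _ gy. Qed.

Lemma acc_point_nbhs (T : topologicalType) (g : nat -> T) (p : T) (B : set T) :
  acc_point g p -> nbhs p B -> exists i, B (g i).
Proof.
move=> gp pB; have gRange : (g @ \oo) (range g) by exists 0%N => // i _; exists i.
by have [_ [[i _ <-] Bgi]] := gp _ _ gRange pB; exists i.
Qed.

Section Charts.
Variables (R : realType) (n : nat) (M : topologicalType).
Implicit Types (a b c : chart R n M) (V Y Z : set 'rV[R]_n).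

Lemma covers_refl a V : covers a V a V.
Proof. by move=> y dy [p Vp ap]; exists id; do 2!split => //; exists p. Qed.

Lemma covers_trans a b c V Y Z :
  covers a V b Y -> covers b Y c Z -> covers a V c Z.
Proof.
move=> abc bcZ y dy /(bcZ y dy)[phi [phiI [dphi /(abc _ dphi)]]].
move=> [psi [psiI aV]]; exists (phi \o psi); split=> // i j ij.
by apply: phiI; apply: psiI.
Qed.

Lemma bequiv_trans a b c V Y Z :
  bequiv a V b Y -> bequiv b Y c Z -> bequiv a V c Z.
Proof. by move=> [ab ba] [bc cb]; split; apply: covers_trans; eassumption. Qed.

Lemma cran_open a : is_chart a -> open (cran a).
Proof. by case=> dom_open _ _; apply. Qed.

Lemma cran_rel_boundary a U x :
  is_chart a -> cran a x -> ~ rel_boundary U (cran a) x.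
Proof. by move=> /cran_open; rewrite openE => ran_open /ran_open ? []. Qed.

Lemma closure_cran_seq a x : closure (cran a) x ->
  exists2 u : nat -> M, (forall i, cdom a (u i)) & cmap a \o u @ \oo --> x.
Proof.
move=> x_cl; apply: exists_seq_cvg => B /x_cl[_ [[z dz <-] Bz]]; by exists z.
Qed.

Lemma covers_closure_eq a x y :
  closure (cran a) x -> covers a [set y] a [set x] -> x = y.
Proof.
move=> /closure_cran_seq[u du ux] yx.
have [phi [phiI [_ [_ -> acc_y]]]] :=
  yx u du (ex_intro2 _ _ x erefl (cvg_acc_point ux)).
by apply: cvg_acc_point_eq (cvg_subseq phiI ux) acc_y; exact: norm_hausdorff.
Qed.

End Charts.

Section Identification.
Variables (R : realType) (n : nat) (M : topologicalType)
  (A : set (chart R n M)) (Q : set (ext_index R n M)).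
Hypotheses (A_chart : forall a, A a -> is_chart a) (Q_ext : Q `<=` extension A).

Lemma S_Q_chart (s : S_Q A Q) : is_chart (val s).1.
Proof.
apply: A_chart; have := set_valP s.
by case: (val s) => a U [[]|/Q_ext[]].
Qed.

Lemma Nset_closure (e : ext_index R n M) : Nset e `<=` closure (cran e.1).
Proof. by move=> x [/subset_closure|[[]]]. Qed.

Lemma ident_refl (a : NQ A Q) : ident a a.
Proof.
case: (set_valP (projT2 a)) => [xa|bd]; [left|right].
  by have [z dz az] := xa; do 2!split => //; exists z.
by do 2!split => //; split; exact: covers_refl.
Qed.

Lemma ident_sym (a b : NQ A Q) : ident a b -> ident b a.
Proof.
case=> [[xa [yb [z [da db az bz]]]]|[xa [yb [ab ba]]]]; [left|right].
  by do 2!split => //; exists z.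
by do 2!split => //; split.
Qed.

Lemma ident_trans (a b c : NQ A Q) : ident a b -> ident b c -> ident a c.
Proof.
have b_chart := S_Q_chart (projT1 b).
case=> [[xa [yb [z [da db az bz]]]]|[xa [yb ab]]];
  case=> [[yb' [xc [z' [db' dc bz' cz]]]]|[yb' [xc bc]]].
- have zz' : z = z'.
    by case: b_chart => _ b_inj _ _; apply: b_inj; rewrite ?inE // bz bz'.
  by left; do 2!split => //; subst z'; exists z.
- by have := cran_rel_boundary b_chart yb yb'.
- by have := cran_rel_boundary b_chart yb' yb.
- by right; do 2!split => //; exact: bequiv_trans ab bc.
Qed.

Lemma identb_ident (a b : NQ A Q) : identb a b -> ident a b.
Proof.
move/asboolP; elim=> [x y //|x|x y _|x y z _ xy _ yz].
- exact: ident_refl.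
- exact: ident_sym.
- exact: ident_trans xy yz.
Qed.

Lemma qmap_ident (a b : NQ A Q) :
  @qmap R n M A Q a = @qmap R n M A Q b -> ident a b.
Proof.
move=> ab; apply: identb_ident.
have : a = b %[mod {eq_quot ident_equiv A Q}]%qT by exact: ab.
by move/eqmodP.
Qed.

Lemma ident_Nset_eq (s : S_Q A Q) (x y : set_type (Nset (val s))) :
  ident (existT _ s x) (existT _ s y) -> x = y.
Proof.
case=> [[_ [_ [z [_ _ zx zy]]]]|[_ [_ [_ yx]]]]; apply: val_inj.
  exact: etrans (esym zx) zy.
exact: covers_closure_eq (Nset_closure (set_valP x)) yx.
Qed.

End Identification.

Section Lift.
Variables (R : realType) (n : nat) (M : topologicalType)
  (A : set (chart R n M)) (Q : set (ext_index R n M)).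
Hypotheses (A_chart : forall a, A a -> is_chart a) (Q_ext : Q `<=` extension A).
Variables (s : S_Q A Q) (W : set 'rV[R]_n).
Let al := (val s).1.

Definition confined (b : chart R n M) (N : set 'rV[R]_n) : Prop :=
  exists2 F, closed F /\ F `&` Nset (val s) `<=` W &
    forall w, cdom b w -> N (cmap b w) -> cdom al w /\ F (cmap al w).

Definition confined_at (b : chart R n M) (p : 'rV[R]_n) : Prop :=
  exists N, [/\ open N, N p & confined b N].

Definition lift_open : set (NQ A Q) :=
  [set e | confined_at (nq_index e).1 (nq_point e)].

Lemma confined_at_open (b : chart R n M) : open (confined_at b).
Proof.
rewrite openE => p [N [oN Np bN]].
by apply: filterS (open_nbhs_nbhs (conj oN Np)) => q Nq; exists N.
Qed.

Lemma lift_open_open : open lift_open.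
Proof.
by apply/sigT_openP => i; exists (confined_at (val i).1); first exact: confined_at_open.
Qed.

Lemma confined_at_transport (b c : chart R n M) (z : M) :
  is_chart b -> is_chart c -> cdom b z -> cdom c z ->
  confined_at b (cmap b z) -> confined_at c (cmap c z).
Proof.
move=> b_chart c_chart bz cz [N [oN Nz [F FW bF]]].
have [b_open _ b_cont _] := b_chart; have [c_open c_inj _ c_openmap] := c_chart.
set D := cdom b `&` cmap b @^-1` N `&` cdom c.
have oD : open D.
  apply: openI c_open; move: b_cont; rewrite continuous_open_subspace //.
  by move/(continuous_inP _ b_open); apply.
exists (cmap c @` D); split; [by apply: c_openmap => // w []|by exists z|].
exists F => // w cw [w' [[bw' Nw'] cw'] cw'w].
have <- : w' = w by apply: c_inj; rewrite ?inE.
exact: bF bw' Nw'.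
Qed.

Lemma confined_at_covers (b c : chart R n M) (x y : 'rV[R]_n) :
  covers b [set x] c [set y] -> confined_at b x -> confined_at c y.
Proof.
move=> bc [N [oN Nx [F FW bF]]]; apply: contrapT => no_nbhd.
have meets B : nbhs y B ->
    exists2 w, cdom c w /\ ~ (cdom al w /\ F (cmap al w)) & B (cmap c w).
  move=> yB; apply: contrapT => noB; apply: no_nbhd; exists (interior B); split.
  - exact: open_interior.
  - exact: nbhs_singleton (nbhs_interior yB).
  - exists F => // w cw /interior_subset Bw; apply: contrapT => bad.
    by apply: noB; exists w.
have [u cu uy] := exists_seq_cvg meets.
have [phi [_ [bu [_ -> acc_x]]]] :=
  bc u (fun i => (cu i).1) (ex_intro2 _ _ y erefl (cvg_acc_point uy)).
have [i Ni] := acc_point_nbhs acc_x (open_nbhs_nbhs (conj oN Nx)).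
by apply: (cu (phi i)).2; exact: bF (bu i) Ni.
Qed.

Lemma lift_open_ident (a b : NQ A Q) : ident a b -> lift_open a -> lift_open b.
Proof.
case=> [[_ [_ [z [az bz za zb]]]]|[_ [_ [ab _]]]].
  rewrite /lift_open /= -za -zb; apply: confined_at_transport az bz;
  exact: S_Q_chart A_chart Q_ext _.
exact: confined_at_covers ab.
Qed.

Lemma lift_open_repr (e : NQ A Q) :
  lift_open (repr (@qmap R n M A Q e)) <-> lift_open e.
Proof.
have e_repr : ident (repr (@qmap R n M A Q e)) e.
  by apply: (qmap_ident A_chart Q_ext); exact: reprK.
by split; apply: lift_open_ident; [|exact: ident_sym].
Qed.

Lemma open_lift_image : open [set q : QM A Q | lift_open (repr q)].
Proof.
have preim : @qmap R n M A Q @^-1` [set q | lift_open (repr q)] = lift_open.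
  by apply/seteqP; split => e /lift_open_repr.
by have op := lift_open_open; rewrite -preim in op; exact op.
Qed.

Lemma lift_open_Nset (x : set_type (Nset (val s))) :
  open W -> lift_open (existT _ s x) <-> W (val x).
Proof.
move=> oW; split.
- move=> [N [oN Nx [F [Fcl FW] alF]]]; apply: FW; split; last exact: set_valP x.
  rewrite (closure_id F).1 // => B xB.
  have /Nset_closure/(_ _ (filterI xB (open_nbhs_nbhs (conj oN Nx)))) := set_valP x.
  move=> [_ [[z alz <-] [Bz Nz]]]; exists (cmap al z); split => //.
  exact: (alF z alz Nz).2.
- move=> Wx; have [B xB clBW] :=
    @uniform_regular _ (val x) W (open_nbhs_nbhs (conj oW Wx)).
  exists (interior B); split; first exact: open_interior.
    exact: nbhs_singleton (nbhs_interior xB).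
  exists (closure B); first by split; [exact: closed_closure|move=> p [/clBW]].
  by move=> w alw /interior_subset/subset_closure.
Qed.

End Lift.

Theorem mainTheorem16 (R : realType) (n : nat) (M : topologicalType)
    (A : set (chart R n M)) :
  smooth_manifold A ->
  forall Q : set (ext_index R n M), Q `<=` extension A ->
  forall s : S_Q A Q,
    homeo_onto_image (fun x : set_type (Nset (val s)) => @qmap R n M A Q (existT _ s x)).
Proof.
move=> [_ _ [A_chart _ _ _]] Q Q_ext s; split.
- by move=> x y /(qmap_ident A_chart Q_ext)/ident_Nset_eq.
- move=> x; apply: continuous_comp; first exact: existT_continuous.
  exact: pi_continuous.
- move=> _ [W oW <-]; exists [set q | lift_open s W (repr q)].
    exact: open_lift_image.
  apply/seteqP; split=> [_ [x Wx <-]|q [+ [x _ xq]]].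
    split; last by exists x.
    by apply/(lift_open_repr A_chart Q_ext)/(lift_open_Nset x oW).
  rewrite -xq => /(lift_open_repr A_chart Q_ext)/(lift_open_Nset x oW) Wx.
  by exists x.
Qed.
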